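(* Let $P, Q \subseteq \mathbb{R}^d$ be polytopes such that $L_P(s) = L_Q(s)$ for all real $s \ge 0$. Then $L_{\operatorname{ppyr} P}(s) = L_{\operatorname{ppyr} Q}(s)$ for all real $s \ge 0$.
   Context: For a polytope $P \subseteq \mathbb{R}^d$ and real $s \ge 0$, $L_P(s) = \#(sP \cap \mathbb{Z}^d)$, where $sP = \{sx : x \in P\}$ (so $0P=\{0\}$ and $L_P(0)=1$). The pseudopyramid of $P$ is $\operatorname{ppyr}(P) = \operatorname{conv}(P \cup \{0\}) = \bigcup_{0 \le \lambda \le 1} \lambda P$. *)

From Stdlib Require Import Reals List ZArith.
From Stdlib Require Fin.
Import ListNotations.
Open Scope R_scope.

Definition pt (d : nat) := Fin.t d -> R.

Definition Rsum (l : list R) : R := fold_right Rplus 0 l.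

Definition in_conv {d : nat} (V : list (pt d)) (x : pt d) : Prop :=
  exists w : list R,
    length w = length V /\
    Forall (fun a => 0 <= a) w /\
    Rsum w = 1 /\
    forall i : Fin.t d,
      x i = Rsum (map (fun p => fst p * snd p i) (combine w V)).

Definition is_polytope {d : nat} (P : pt d -> Prop) : Prop :=
  exists V : list (pt d), V <> [] /\ forall x, P x <-> in_conv V x.

(* Dilation sP = { s x : x in P }, with the convention 0P = {0}. *)
Definition dil {d : nat} (s : R) (P : pt d -> Prop) (x : pt d) : Prop :=
  (s = 0 /\ forall i, x i = 0) \/
  (s <> 0 /\ exists y, P y /\ forall i, x i = s * y i).

Definition ppyr {d : nat} (P : pt d -> Prop) (x : pt d) : Prop :=
  exists lam, 0 <= lam <= 1 /\ dil lam P x.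

(* Lattice points of Z^d, encoded as integer lists of length d. *)
Definition embed (d : nat) (z : list Z) : pt d :=
  fun i => IZR (nth (proj1_sig (Fin.to_nat i)) z 0%Z).

Definition is_lattice_pt_of {d : nat} (S : pt d -> Prop) (z : list Z) : Prop :=
  length z = d /\ S (embed d z).

Definition lattice_count {d : nat} (S : pt d -> Prop) (n : nat) : Prop :=
  exists l : list (list Z),
    NoDup l /\ (forall z, In z l <-> is_lattice_pt_of S z) /\ length l = n.

Definition Lp {d : nat} (P : pt d -> Prop) (s : R) (n : nat) : Prop :=
  lattice_count (dil s P) n.

(* For a lattice point x <> 0 the scales t > 0 with x in tP form an interval (P is convex)
   containing its infimum (P is closed, and bounded so the infimum is positive); and x lies
   in s ppyr(P) iff that least scale is at most s.  All lattice points of s ppyr(P) lie in a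
   finite box, so only finitely many least scales e <= s occur, and for a small enough
   del > 0 the lattice points with least scale e are counted by L_P(e) - L_P(e - del).
   Hence L_ppyr(P)(s) = 1 + sum_e (L_P(e) - L_P(e - del)), and choosing the scales and del
   for P and Q simultaneously, the right-hand sides agree because L_P = L_Q. *)

From Stdlib Require Import Reals List ZArith Lra Lia ClassicalEpsilon Classical FunctionalExtensionality.
From Stdlib Require Fin.
Import ListNotations.
Open Scope R_scope.

Definition ind (p : Prop) : Z := if excluded_middle_informative p then 1%Z else 0%Z.

Lemma ind_T (p : Prop) : p -> ind p = 1%Z.
Proof. intro h; unfold ind; destruct (excluded_middle_informative p); tauto. Qed.

Lemma ind_F (p : Prop) : ~ p -> ind p = 0%Z.
Proof. intro h; unfold ind; destruct (excluded_middle_informative p); tauto. Qed.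

Lemma ind_iff (p q : Prop) : (p <-> q) -> ind p = ind q.
Proof. intro h; destruct (classic p); [rewrite !ind_T | rewrite !ind_F]; tauto. Qed.

Definition zsum {A} (l : list A) (f : A -> Z) : Z :=
  fold_right (fun a acc => (f a + acc)%Z) 0%Z l.

Lemma zsum_ext {A} (l : list A) f g : (forall a, In a l -> f a = g a) -> zsum l f = zsum l g.
Proof. induction l; simpl; intros; auto. rewrite H, IHl; auto. Qed.

Lemma zsumD {A} (l : list A) f g : zsum l (fun a => (f a + g a)%Z) = (zsum l f + zsum l g)%Z.
Proof. induction l; simpl; auto. rewrite IHl; lia. Qed.

Lemma zsumB {A} (l : list A) f g : zsum l (fun a => (f a - g a)%Z) = (zsum l f - zsum l g)%Z.
Proof. induction l; simpl; auto. rewrite IHl; lia. Qed.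

Lemma zsum0 {A} (l : list A) f : (forall a, In a l -> f a = 0%Z) -> zsum l f = 0%Z.
Proof. induction l; simpl; intros; auto. rewrite H, IHl; auto. Qed.

Lemma exchange_zsum {A B} (l1 : list A) (l2 : list B) F :
  zsum l1 (fun a => zsum l2 (F a)) = zsum l2 (fun b => zsum l1 (fun a => F a b)).
Proof.
  induction l1; simpl. { symmetry; apply zsum0; auto. }
  rewrite IHl1, <- zsumD. reflexivity.
Qed.

Lemma zsum_ind_eq {A} (E : list A) a : NoDup E -> In a E -> zsum E (fun e => ind (e = a)) = 1%Z.
Proof.
  induction 1 as [|x E hx hE IH]; simpl; intros Hi; [contradiction|].
  destruct Hi as [<-|Hi].
  - rewrite ind_T, zsum0 by (auto; intros b Hb; apply ind_F; intros ->; tauto). lia.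
  - rewrite ind_F, IH by (auto; intros ->; tauto). lia.
Qed.

Definition small_enough (C : R -> Prop) : Prop :=
  exists eps, 0 < eps /\ forall del, 0 < del <= eps -> C del.

Lemma small_enough_and (C1 C2 : R -> Prop) :
  small_enough C1 -> small_enough C2 -> small_enough (fun del => C1 del /\ C2 del).
Proof.
  intros [e1 [he1 h1]] [e2 [he2 h2]]. exists (Rmin e1 e2); split; [now apply Rmin_pos|].
  intros del hd. pose proof (Rmin_l e1 e2); pose proof (Rmin_r e1 e2).
  split; [apply h1 | apply h2]; lra.
Qed.

Lemma small_enough_all {A} (l : list A) (C : A -> R -> Prop) :
  (forall a, In a l -> small_enough (C a)) ->
  small_enough (fun del => forall a, In a l -> C a del).
Proof.
  induction l as [|a l IH]; intros H.
  - exists 1; split; [lra | intros; contradiction].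
  - destruct (small_enough_and _ _ (H a (or_introl eq_refl)) (IH (fun b hb => H b (or_intror hb))))
      as [e [he h]].
    exists e; split; auto. intros del hd b [<-|hb];
      [exact (proj1 (h del hd)) | exact (proj2 (h del hd) b hb)].
Qed.

Lemma small_enough_witness (C : R -> Prop) : small_enough C -> exists del, 0 < del /\ C del.
Proof. intros [e [he h]]. exists e; split; auto. apply h; lra. Qed.

Definition comb {d} (w : list R) (V : list (pt d)) (i : Fin.t d) : R :=
  Rsum (map (fun p => fst p * snd p i) (combine w V)).

Lemma comb_cons {d} a w v (V : list (pt d)) i : comb (a :: w) (v :: V) i = a * v i + comb w V i.
Proof. reflexivity. Qed.

Lemma comb_nil {d} w i : comb w (@nil (pt d)) i = 0.
Proof. destruct w; reflexivity. Qed.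

Lemma Rsum_ge0 w : Forall (fun a => 0 <= a) w -> 0 <= Rsum w.
Proof. induction 1; simpl; lra. Qed.

Lemma Rsum_scale c w : Rsum (map (Rmult c) w) = c * Rsum w.
Proof. induction w; simpl; [ring | rewrite IHw; ring]. Qed.

Lemma comb_scale {d} c w (V : list (pt d)) i : comb (map (Rmult c) w) V i = c * comb w V i.
Proof.
  revert V; induction w; intros V; destruct V; try (unfold comb; simpl; ring).
  simpl map. rewrite !comb_cons, IHw. ring.
Qed.

Lemma comb_sum0 {d} w (V : list (pt d)) i :
  Forall (fun a => 0 <= a) w -> Rsum w = 0 -> comb w V i = 0.
Proof.
  intros H; revert V; induction H as [|a w ha hw IH]; intros V Hs; destruct V;
    try (unfold comb; simpl; ring).
  simpl in Hs. pose proof (Rsum_ge0 _ hw).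
  rewrite comb_cons, IH by lra. replace a with 0 by lra. ring.
Qed.

Lemma comb_repeat0 {d} n (V : list (pt d)) i : comb (repeat 0 n) V i = 0.
Proof.
  revert V; induction n; intros V; destruct V; try (unfold comb; simpl; ring).
  simpl repeat. rewrite comb_cons, IHn. ring.
Qed.

Lemma comb_bound {d} C w (V : list (pt d)) i :
  0 <= C -> (forall v, In v V -> forall i, Rabs (v i) <= C) ->
  Forall (fun a => 0 <= a) w -> Rabs (comb w V i) <= C * Rsum w.
Proof.
  intros HC HV H; revert V HV; induction H as [|a w ha hw IH]; intros V HV; destruct V;
    try (unfold comb; simpl; rewrite Rabs_R0; try lra).
  - pose proof (Rsum_ge0 _ hw). nra.
  - rewrite comb_cons. simpl Rsum.
    pose proof (IH V (fun v Hv => HV v (or_intror Hv))).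
    pose proof (HV p (or_introl eq_refl) i).
    pose proof (Rabs_triang (a * p i) (comb w V i)).
    rewrite Rabs_mult, (Rabs_right a) in * by lra. nra.
Qed.

Definition mixw (a b : R) (w1 w2 : list R) : list R :=
  map (fun p => a * fst p + b * snd p) (combine w1 w2).

Lemma mixw_length a b w1 w2 : length w1 = length w2 -> length (mixw a b w1 w2) = length w1.
Proof. intro h; unfold mixw; rewrite length_map, length_combine, h; lia. Qed.

Lemma Rsum_mixw a b w1 w2 :
  length w1 = length w2 -> Rsum (mixw a b w1 w2) = a * Rsum w1 + b * Rsum w2.
Proof.
  revert w2; induction w1; intros w2 h; destruct w2; simpl in *; try lia; try ring.
  unfold mixw in *; simpl. rewrite IHw1 by lia. ring.
Qed.

Lemma comb_mixw {d} a b w1 w2 (V : list (pt d)) i : length w1 = length w2 ->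
  comb (mixw a b w1 w2) V i = a * comb w1 V i + b * comb w2 V i.
Proof.
  revert w2 V; induction w1; intros w2 V h; destruct w2; simpl in *; try lia;
    destruct V; try (unfold comb; simpl; ring).
  unfold mixw in *; simpl map. rewrite !comb_cons, IHw1 by lia. simpl. ring.
Qed.

Lemma mixw_ge0 a b w1 w2 : 0 <= a -> 0 <= b -> Forall (fun a => 0 <= a) w1 ->
  Forall (fun a => 0 <= a) w2 -> Forall (fun a => 0 <= a) (mixw a b w1 w2).
Proof.
  intros ha hb h1; revert w2; induction h1; intros w2 h2; destruct h2; unfold mixw; simpl;
    constructor; [simpl; nra | apply IHh1; auto].
Qed.

Definition convex {d} (S : pt d -> Prop) : Prop :=
  forall y1 y2 a y, S y1 -> S y2 -> 0 <= a <= 1 ->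
    (forall i, y i = a * y1 i + (1 - a) * y2 i) -> S y.

Definition bounded {d} (S : pt d -> Prop) : Prop :=
  exists B, 0 < B /\ forall y, S y -> forall i, Rabs (y i) <= B.

Definition closed_pt {d} (S : pt d -> Prop) : Prop := forall z : pt d,
  (forall eps, 0 < eps -> exists y, S y /\ forall i, Rabs (y i - z i) < eps) -> S z.

Lemma conv_convex {d} (V : list (pt d)) : convex (in_conv V).
Proof.
  intros y1 y2 a y [w1 [l1 [n1 [s1 e1]]]] [w2 [l2 [n2 [s2 e2]]]] ha hy.
  exists (mixw a (1 - a) w1 w2). split; [rewrite mixw_length; lia|].
  split; [apply mixw_ge0; auto; lra|].
  split; [rewrite Rsum_mixw, s1, s2 by lia; ring|].
  intro i. change (y i = comb (mixw a (1 - a) w1 w2) V i).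
  rewrite comb_mixw, hy, e1, e2 by lia. reflexivity.
Qed.

Lemma fin_bound d (f : pt d) : exists B, 0 <= B /\ forall i, Rabs (f i) <= B.
Proof.
  induction d.
  { exists 0; split; [lra | intro i; apply (Fin.case0 (fun _ => _) i)]. }
  destruct (IHd (fun j => f (Fin.FS j))) as [B [HB H]].
  set (M := Rmax B (Rabs (f Fin.F1))).
  pose proof (Rmax_l B (Rabs (f Fin.F1))); pose proof (Rmax_r B (Rabs (f Fin.F1))).
  exists M; split; [unfold M; lra|].
  intro i. apply (Fin.caseS' i (fun i => Rabs (f i) <= M)); [auto|].
  intro j. pose proof (H j). unfold M; simpl in *; lra.
Qed.

Lemma vertices_bound {d} (V : list (pt d)) :
  exists C, 0 <= C /\ forall v, In v V -> forall i, Rabs (v i) <= C.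
Proof.
  induction V as [|a V [C [HC H]]].
  { exists 0; split; [lra | intros; contradiction]. }
  destruct (fin_bound d a) as [B [HB Ha]].
  pose proof (Rmax_l C B); pose proof (Rmax_r C B).
  exists (Rmax C B); split; [lra|].
  intros v [<-|Hv] i; [pose proof (Ha i) | pose proof (H v Hv i)]; lra.
Qed.

Lemma conv_bounded {d} (V : list (pt d)) : bounded (in_conv V).
Proof.
  destruct (vertices_bound V) as [C [HC H]]. exists (C + 1); split; [lra|].
  intros y [w [_ [n [s e]]]] i. rewrite e. change (Rabs (comb w V i) <= C + 1).
  pose proof (comb_bound C w V i HC H n). rewrite s in *. lra.
Qed.

Lemma conv_nil {d} (y : pt d) : ~ in_conv [] y.
Proof. intros [w [l [_ [s _]]]]. destruct w; simpl in *; [lra | discriminate]. Qed.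

Lemma conv_vertex {d} v (V : list (pt d)) : in_conv (v :: V) v.
Proof.
  exists (1 :: repeat 0 (length V)). simpl. split; [rewrite repeat_length; auto|].
  split. { constructor; [lra|]. apply Forall_forall; intros x Hx; apply repeat_spec in Hx; lra. }
  split.
  - assert (Rsum (repeat 0 (length V)) = 0) by (induction (length V); simpl; lra). lra.
  - intro i. change (v i = comb (1 :: repeat 0 (length V)) (v :: V) i).
    rewrite comb_cons, comb_repeat0; ring.
Qed.

Lemma conv_single {d} (v y : pt d) : in_conv [v] y <-> forall i, y i = v i.
Proof.
  split.
  - intros [w [l [n [s e]]]] i. destruct w as [|a [|b w]]; simpl in l; try lia.
    simpl in s. rewrite e. change (a * v i + comb [] (@nil (pt d)) i = v i).
    rewrite comb_nil. replace a with 1 by lra. ring.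
  - intro h. exists [1]. split; [reflexivity|]. split; [constructor; [lra | constructor]|].
    split; [simpl; ring|]. intro i. change (y i = comb [1] [v] i).
    rewrite comb_cons, comb_nil, h; ring.
Qed.

Definition join {d} (v : pt d) (W : pt d -> Prop) (z : pt d) : Prop :=
  exists lam y, 0 <= lam <= 1 /\ W y /\ forall i, z i = lam * v i + (1 - lam) * y i.

Lemma conv_cons {d} (v : pt d) V z : V <> [] -> in_conv (v :: V) z <-> join v (in_conv V) z.
Proof.
  intro HV. split.
  - intros [w [l [n [s e]]]]. destruct w as [|a w]; simpl in l; [lia|].
    inversion n as [|? ? ha hw]; subst. simpl in s. pose proof (Rsum_ge0 _ hw).
    destruct (Req_dec_T a 1) as [->|Ha].
    + destruct V as [|u V]; [tauto|].
      exists 1, u. split; [lra|]. split; [apply conv_vertex|].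
      intro i. rewrite e. change (comb (1 :: w) (v :: u :: V) i = 1 * v i + (1 - 1) * u i).
      rewrite comb_cons, comb_sum0 by (auto; lra). ring.
    + assert (hinv : 0 < / (1 - a)) by (apply Rinv_0_lt_compat; lra).
      exists a, (fun i => comb (map (Rmult (/ (1 - a))) w) V i). split; [lra|]. split.
      * exists (map (Rmult (/ (1 - a))) w). split; [rewrite length_map; lia|].
        split.
        { apply Forall_forall; intros x Hx. apply in_map_iff in Hx as [u [<- Hu]].
          rewrite Forall_forall in hw. pose proof (hw u Hu). nra. }
        split; [|reflexivity].
        rewrite Rsum_scale. replace (Rsum w) with (1 - a) by lra. field; lra.
      * intro i. rewrite e.
        change (comb (a :: w) (v :: V) i =
                a * v i + (1 - a) * comb (map (Rmult (/ (1 - a))) w) V i).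
        rewrite comb_cons, comb_scale. field. lra.
  - intros [lam [y [hl [[w [l [n [s e]]]] hz]]]].
    exists (lam :: map (Rmult (1 - lam)) w). simpl. split; [rewrite length_map; lia|].
    split.
    { constructor; [lra|]. apply Forall_forall; intros x Hx.
      apply in_map_iff in Hx as [u [<- Hu]].
      rewrite Forall_forall in n. pose proof (n u Hu). nra. }
    split; [rewrite Rsum_scale, s; ring|].
    intro i. change (z i = comb (lam :: map (Rmult (1 - lam)) w) (v :: V) i).
    rewrite comb_cons, comb_scale, hz, e. reflexivity.
Qed.

(* [c] is the largest parameter that is still approached by arbitrarily good approximations. *)
Lemma cluster_point_01 (A : R -> R -> Prop) :
  (forall lam e1 e2, A lam e1 -> e1 <= e2 -> A lam e2) ->
  (forall eps, 0 < eps -> exists lam, 0 <= lam <= 1 /\ A lam eps) ->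
  exists c, 0 <= c <= 1 /\ forall eta eps, 0 < eta -> 0 < eps ->
    exists lam, 0 <= lam <= 1 /\ Rabs (lam - c) <= eta /\ A lam eps.
Proof.
  intros Amono H0.
  set (S := fun c => forall eps, 0 < eps -> exists lam, 0 <= lam /\ c <= lam <= 1 /\ A lam eps).
  destruct (completeness S) as [c [Hub Hlub]].
  - exists 1. intros c Hc. destruct (Hc 1 Rlt_0_1) as [lam [_ [h _]]]; lra.
  - exists 0. intros eps Heps. destruct (H0 eps Heps) as [lam [h1 h2]].
    exists lam; repeat split; try lra; auto.
  - assert (Hc0 : 0 <= c).
    { apply Hub. intros eps Heps. destruct (H0 eps Heps) as [lam [h1 h2]].
      exists lam; repeat split; try lra; auto. }
    assert (Hc1 : c <= 1).
    { apply Hlub. intros c' Hc'. destruct (Hc' 1 Rlt_0_1) as [lam [_ [h _]]]; lra. }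
    exists c; split; [lra|]. intros eta eps Heta Heps.
    destruct (classic (exists eps0, 0 < eps0 /\
                         ~ exists lam, c + eta <= lam <= 1 /\ A lam eps0))
      as [[eps0 [He0 Hn0]]|Hn].
    2:{ exfalso. assert (S (c + eta)) as Hs; [|pose proof (Hub _ Hs); lra].
        intros e He. apply NNPP. intro hn. apply Hn. exists e; split; auto.
        intros [lam [h1 h2]]. apply hn. exists lam; repeat split; try lra; auto. }
    destruct (classic (exists c', S c' /\ c - eta < c')) as [[c' [Hc' Hlt]]|Hn].
    2:{ exfalso. assert (c <= c - eta); [|lra]. apply Hlub. intros c' Hc'.
        apply Rnot_lt_le. intro hlt. apply Hn. exists c'; auto. }
    destruct (Hc' (Rmin eps eps0)) as [lam [hl0 [hl ha]]]; [now apply Rmin_pos|].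
    exists lam. split; [lra|]. split.
    + assert (lam < c + eta).
      { apply Rnot_le_lt. intro hle. apply Hn0. exists lam. split; [lra|].
        apply (Amono _ _ _ ha), Rmin_r. }
      apply Rabs_le; lra.
    + apply (Amono _ _ _ ha), Rmin_l.
Qed.

Lemma Rabs_sub_le (a b A B : R) : Rabs a <= A -> Rabs b <= B -> Rabs (a - b) <= A + B.
Proof. intros h1 h2. pose proof (Rabs_triang a (- b)). rewrite Rabs_Ropp in *. unfold Rminus. lra. Qed.

Lemma Req_of_approx (a b : R) : (forall e, 0 < e -> Rabs (a - b) < e) -> a = b.
Proof.
  intro H. destruct (Req_dec_T a b) as [|n]; auto. exfalso.
  assert (0 < Rabs (a - b)) as h by (apply Rabs_pos_lt; lra).
  specialize (H _ h). lra.
Qed.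

Lemma join_perturb (lam c a b z C eta eps : R) :
  Rabs (lam * a + (1 - lam) * b - z) < eps -> Rabs (lam - c) <= eta -> Rabs (b - a) <= C ->
  Rabs (c * a + (1 - c) * b - z) < eps + eta * C.
Proof.
  intros h1 h2 h3.
  replace (c * a + (1 - c) * b - z) with ((lam * a + (1 - lam) * b - z) + (lam - c) * (b - a))
    by ring.
  eapply Rle_lt_trans; [apply Rabs_triang|]. rewrite Rabs_mult.
  assert (Rabs (lam - c) * Rabs (b - a) <= eta * C)
    by (apply Rmult_le_compat; auto using Rabs_pos). lra.
Qed.

Lemma join_closed {d} (v : pt d) (W : pt d -> Prop) :
  closed_pt W -> bounded W -> (exists y, W y) -> closed_pt (join v W).
Proof.
  intros HW [B [HB HBW]] [y0 Hy0] z Hz.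
  set (Apx := fun lam eps => exists y, W y /\
                forall i, Rabs (lam * v i + (1 - lam) * y i - z i) < eps).
  destruct (cluster_point_01 Apx) as [c [Hc Hclus]].
  { intros lam e1 e2 [y [Hy Hi]] h. exists y; split; auto. intro i; specialize (Hi i); lra. }
  { intros eps Heps. destruct (Hz eps Heps) as [y [[lam [y' [hl [hy' he]]]] Hyz]].
    exists lam; split; auto. exists y'; split; auto. intro i; rewrite <- he; auto. }
  destruct (fin_bound d v) as [Bv [HBv HBv']].
  set (C := B + Bv + 1). assert (HC : 0 < C) by (unfold C; lra).
  assert (Hnear : forall e, 0 < e -> exists y, W y /\
                    forall i, Rabs (c * v i + (1 - c) * y i - z i) < e).
  { intros e He. destruct (Hclus (e / (2 * C)) (e / 2)) as [lam [_ [hlc [y [Hy Hyi]]]]];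
      [apply Rdiv_lt_0_compat; lra | lra |].
    exists y; split; auto. intro i.
    assert (Rabs (y i - v i) <= C)
      by (pose proof (Rabs_sub_le _ _ _ _ (HBW y Hy i) (HBv' i)); unfold C; lra).
    replace e with (e / 2 + e / (2 * C) * C) by (field; lra). eapply join_perturb; eauto. }
  destruct (Req_dec_T c 1) as [->|Hc1].
  - exists 1, y0. split; [lra|]. split; auto. intro i.
    enough (v i = z i) as <- by ring.
    apply Req_of_approx. intros e He. destruct (Hnear e He) as [y [_ Hy]].
    specialize (Hy i). replace (1 * v i + (1 - 1) * y i) with (v i) in Hy by ring. exact Hy.
  - set (ys := fun i => (z i - c * v i) / (1 - c)).
    exists c, ys. split; [lra|]. split; [|intro i; unfold ys; field; lra].
    apply HW. intros e He. destruct (Hnear (e * (1 - c))) as [y [Hy Hyi]]; [nra|].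
    exists y; split; auto. intro i. specialize (Hyi i).
    replace (c * v i + (1 - c) * y i - z i) with ((1 - c) * (y i - ys i)) in Hyi
      by (unfold ys; field; lra).
    rewrite Rabs_mult, (Rabs_right (1 - c)) in Hyi by lra.
    apply (Rmult_lt_reg_l (1 - c)); lra.
Qed.

Lemma conv_closed {d} (V : list (pt d)) : closed_pt (in_conv V).
Proof.
  induction V as [|v W IH]; intros z Hz.
  - destruct (Hz 1 Rlt_0_1) as [y [Hy _]]. exfalso; exact (conv_nil y Hy).
  - destruct W as [|w W].
    + apply conv_single. intro i. symmetry. apply Req_of_approx. intros e He.
      destruct (Hz e He) as [y [Hy Hyz]]. rewrite conv_single in Hy. rewrite <- Hy. auto.
    + apply conv_cons; [discriminate|].
      apply join_closed; [exact IH | apply conv_bounded | exists w; apply conv_vertex|].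
      intros e He. destruct (Hz e He) as [y [Hy Hyz]].
      exists y; split; auto. apply conv_cons; [discriminate | exact Hy].
Qed.

Record compact_convex {d} (P : pt d -> Prop) : Prop := {
  cc_convex : convex P;
  cc_closed : closed_pt P;
  cc_bounded : bounded P }.

Lemma polytope_compact_convex {d} (P : pt d -> Prop) : is_polytope P -> compact_convex P.
Proof.
  intros [V [_ HP]]. split.
  - intros y1 y2 a y h1 h2 ha hy. apply HP.
    apply (conv_convex V y1 y2 a y); auto; apply HP; auto.
  - intros z Hz. apply HP, conv_closed. intros e He. destruct (Hz e He) as [y [Hy Hi]].
    exists y; split; auto. apply HP; auto.
  - destruct (conv_bounded V) as [B [HB H]]. exists B; split; auto.
    intros y Hy; apply H, HP, Hy.
Qed.

Definition scales {d} (P : pt d -> Prop) (x : pt d) (t : R) : Prop := 0 < t /\ dil t P x.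

Lemma dil_pos {d} (P : pt d -> Prop) x t :
  0 < t -> dil t P x <-> exists y, P y /\ forall i, x i = t * y i.
Proof. intro ht. unfold dil. split; [intros [[h _]|[_ h]]; [lra | auto] | right; split; auto; lra]. Qed.

Section Scales.

Variable d : nat.
Variable P : pt d -> Prop.
Hypothesis HP : compact_convex P.
Variable x : pt d.

Lemma scales_interval t1 t t2 : scales P x t1 -> scales P x t2 -> t1 <= t <= t2 -> scales P x t.
Proof.
  intros [h1 d1] [h2 d2] ht.
  apply dil_pos in d1 as [y1 [Hy1 e1]]; auto. apply dil_pos in d2 as [y2 [Hy2 e2]]; auto.
  split; [lra|]. apply dil_pos; [lra|].
  destruct (Req_dec_T t1 t2) as [<-|E].
  { replace t with t1 by lra. exists y1; auto. }
  set (a := t1 * (t2 - t) / (t * (t2 - t1))).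
  assert (ha : 0 <= a <= 1).
  { unfold a. split.
    - apply Rmult_le_pos; [apply Rmult_le_pos; lra | left; apply Rinv_0_lt_compat; nra].
    - apply Rmult_le_reg_r with (t * (t2 - t1)); [nra|].
      unfold Rdiv. rewrite Rmult_assoc, Rinv_l by nra. nra. }
  exists (fun i => x i / t). split; [|intro i; field; lra].
  apply (cc_convex P HP y1 y2 a); auto. intro i.
  replace (y1 i) with (x i / t1) by (rewrite e1; field; lra).
  replace (y2 i) with (x i / t2) by (rewrite e2; field; lra).
  unfold a. field. repeat split; lra.
Qed.

Lemma scales_closed e : 0 < e ->
  (forall eps, 0 < eps -> exists t, scales P x t /\ Rabs (t - e) < eps) -> scales P x e.
Proof.
  intros He H. split; auto. apply dil_pos; auto.
  exists (fun i => x i / e). split; [|intro i; field; lra].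
  destruct (fin_bound d x) as [Bx [HBx HBx']].
  apply (cc_closed P HP). intros eps Heps.
  set (r := eps * e * e / (2 * (Bx + 1))).
  assert (Hr : 0 < r) by (unfold r; apply Rdiv_lt_0_compat; [repeat apply Rmult_lt_0_compat|]; lra).
  destruct (H (Rmin (e / 2) r)) as [t [[ht dt] hte]]; [apply Rmin_pos; lra|].
  pose proof (Rmin_l (e / 2) r); pose proof (Rmin_r (e / 2) r).
  apply dil_pos in dt as [y [Hy ey]]; auto. exists y; split; auto. intro i.
  assert (Ht2 : e / 2 < t) by (apply Rabs_def2 in hte; lra).
  (* |y - x/e| * t e = |x| |e - t| <= (Bx + 1) r = eps e^2 / 2 < eps t e *)
  assert (hab : Rabs (y i - x i / e) * (t * e) = Rabs (x i) * Rabs (e - t)).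
  { rewrite <- (Rabs_right (t * e)), <- !Rabs_mult by nra. f_equal. rewrite ey. field; lra. }
  assert (hb : Rabs (x i) * Rabs (e - t) <= (Bx + 1) * r).
  { apply Rmult_le_compat; auto using Rabs_pos; [pose proof (HBx' i); lra|].
    rewrite Rabs_minus_sym; lra. }
  replace ((Bx + 1) * r) with (eps * e * e / 2) in hb by (unfold r; field; lra).
  assert (eps * e * e / 2 < eps * (t * e)).
  { assert (0 < eps * e) by (apply Rmult_lt_0_compat; lra).
    replace (eps * (t * e)) with (eps * e * t) by ring. nra. }
  apply (Rmult_lt_reg_r (t * e)); [nra | lra].
Qed.

Lemma scales_lower_bound : ~ (forall i, x i = 0) ->
  exists m, 0 < m /\ forall t, scales P x t -> m <= t.
Proof.
  intros Hx. destruct (cc_bounded P HP) as [B [HB HBd]].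
  destruct (not_all_ex_not _ _ Hx) as [j Hj].
  exists (Rabs (x j) / B). split; [apply Rdiv_lt_0_compat; auto; apply Rabs_pos_lt; auto|].
  intros t [ht dt]. apply dil_pos in dt as [y [Hy ey]]; auto.
  pose proof (HBd y Hy j). rewrite ey, Rabs_mult, (Rabs_right t) by lra.
  apply Rmult_le_reg_r with B; auto. unfold Rdiv. rewrite Rmult_assoc, Rinv_l by lra.
  pose proof (Rabs_pos (y j)). nra.
Qed.

Definition first_scale (a : R) : Prop := scales P x a /\ forall t, scales P x t -> a <= t.

Lemma first_scale_exists t0 : ~ (forall i, x i = 0) -> scales P x t0 -> exists a, first_scale a.
Proof.
  intros Hx H0. destruct scales_lower_bound as [m [Hm Hlm]]; auto.
  destruct (completeness (fun u => forall t, scales P x t -> u <= t)) as [a [Hub Hlub]].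
  { exists t0. intros u Hu. apply Hu; auto. }
  { exists m; auto. }
  assert (Ham : m <= a) by (apply Hub; auto).
  assert (Hat : forall t, scales P x t -> a <= t)
    by (intros t Ht; apply Hlub; intros u Hu; apply Hu; auto).
  exists a; split; auto. apply scales_closed; [lra|].
  intros eps Heps. apply NNPP; intro hn.
  assert (a + eps <= a); [|lra]. apply Hub. intros t Ht. apply Rnot_lt_le. intro hlt.
  apply hn. exists t. split; auto. pose proof (Hat t Ht). apply Rabs_def1; lra.
Qed.

Lemma not_scales_below e : 0 < e -> ~ scales P x e ->
  small_enough (fun del => ~ scales P x (e - del)).
Proof.
  intros He Hn. apply NNPP. intro h. apply Hn, scales_closed; auto. intros eps Heps.
  apply NNPP. intro h2. apply h. exists (eps / 2). split; [lra|]. intros del hd ht.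
  apply h2. exists (e - del); split; auto. apply Rabs_def1; lra.
Qed.

Lemma scales_origin t : (forall i, x i = 0) -> 0 < t -> scales P x t <-> P (fun _ => 0).
Proof.
  intros Hx ht. unfold scales. rewrite dil_pos by auto. split.
  - intros [_ [y [Hy ey]]]. replace (fun _ : Fin.t d => 0) with y; auto.
    extensionality i. specialize (ey i). rewrite Hx in ey.
    destruct (Rmult_integral _ _ (eq_sym ey)); lra.
  - intro h. split; auto. exists (fun _ => 0); split; auto. intro i; rewrite Hx; ring.
Qed.

End Scales.

Lemma dil_ppyr {d} (P : pt d -> Prop) x s : 0 < s ->
  dil s (ppyr P) x <-> (forall i, x i = 0) \/ exists t, scales P x t /\ t <= s.
Proof.
  intro hs. rewrite dil_pos by auto. split.
  - intros [y [[lam [hl [[hl0 hy]|[hl0 [z [Hz ez]]]]]] ey]].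
    + left. intro i. rewrite ey, hy. ring.
    + right. exists (s * lam). split; [|nra]. split; [destruct hl; nra|].
      apply dil_pos; [destruct hl; nra|].
      exists z; split; auto. intro i. rewrite ey, ez. ring.
  - intros [h|[t [[ht dt] hts]]].
    + exists (fun _ => 0). split; [exists 0; split; [lra | left; auto]|].
      intro i; rewrite h; ring.
    + apply dil_pos in dt as [z [Hz ez]]; auto.
      exists (fun i => (t / s) * z i). split; [|intro i; rewrite ez; field; lra].
      exists (t / s). split.
      * split; [apply Rlt_le, Rdiv_lt_0_compat; auto|].
        apply Rmult_le_reg_r with s; auto. unfold Rdiv; rewrite Rmult_assoc, Rinv_l; lra.
      * right. split; [apply Rgt_not_eq, Rdiv_lt_0_compat; auto | exists z; auto].
Qed.

Definition zrange (K : nat) : list Z :=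
  map (fun k => (Z.of_nat k - Z.of_nat K)%Z) (seq 0 (2 * K + 1)).

Lemma in_zrange K a : (Z.abs a <= Z.of_nat K)%Z -> In a (zrange K).
Proof.
  intro h. apply in_map_iff. exists (Z.to_nat (a + Z.of_nat K)). split.
  - rewrite Z2Nat.id; lia.
  - apply in_seq. lia.
Qed.

Fixpoint boxl (n K : nat) : list (list Z) :=
  match n with
  | O => [[]]
  | S n => flat_map (fun z => map (fun a => a :: z) (zrange K)) (boxl n K)
  end.

Lemma boxl_length n K z : In z (boxl n K) -> length z = n.
Proof.
  revert z; induction n; simpl; intros z H; [destruct H as [<-|[]]; auto|].
  apply in_flat_map in H as [w [Hw Hz]]. apply in_map_iff in Hz as [a [<- _]].
  simpl; rewrite (IHn w Hw); auto.
Qed.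

Lemma in_boxl K z : (forall k, (k < length z)%nat -> (Z.abs (nth k z 0%Z) <= Z.of_nat K)%Z) ->
  In z (boxl (length z) K).
Proof.
  induction z as [|a z IH]; simpl; intro H; auto.
  apply in_flat_map. exists z. split.
  - apply IH. intros k hk. apply (H (S k)). lia.
  - apply in_map_iff. exists a. split; auto. apply in_zrange, (H 0%nat). lia.
Qed.

Definition lattice_box d K : list (list Z) := nodup (list_eq_dec Z.eq_dec) (boxl d K).

Definition covers {d} (Xb : list (list Z)) (S : pt d -> Prop) : Prop :=
  forall z, length z = d -> S (embed d z) -> In z Xb.

Lemma lattice_box_length d K z : In z (lattice_box d K) -> length z = d.
Proof. unfold lattice_box; rewrite nodup_In. apply boxl_length. Qed.

Lemma lattice_box_covers d K (S : pt d -> Prop) :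
  (forall x, S x -> forall i, Rabs (x i) <= INR K) -> covers (lattice_box d K) S.
Proof.
  intros H z Hl Hs. unfold lattice_box; rewrite nodup_In, <- Hl. apply in_boxl.
  intros k hk. rewrite Hl in hk. pose proof (H _ Hs (Fin.of_nat_lt hk)) as h.
  unfold embed in h. rewrite Fin.to_nat_of_nat in h. simpl in h.
  rewrite Rabs_Zabs, INR_IZR_INZ in h. apply le_IZR in h. exact h.
Qed.

Definition box_count {d} (Xb : list (list Z)) (S : pt d -> Prop) : Z :=
  zsum Xb (fun z => ind (S (embed d z))).

Lemma lattice_count_box {d} (S : pt d -> Prop) Xb n :
  NoDup Xb -> (forall z, In z Xb -> length z = d) -> covers Xb S ->
  lattice_count S n <-> Z.of_nat n = box_count Xb S.
Proof.
  intros ND HL HC.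
  set (f := fun z => if excluded_middle_informative (S (embed d z)) then true else false).
  assert (Hmem : forall z, In z (filter f Xb) <-> is_lattice_pt_of S z).
  { intro z. rewrite filter_In. unfold is_lattice_pt_of, f.
    destruct (excluded_middle_informative (S (embed d z))); split;
      intros [h1 h2]; try split; auto; try discriminate; contradiction. }
  assert (Hcount : Z.of_nat (length (filter f Xb)) = box_count Xb S).
  { unfold box_count, f, ind. clear. induction Xb as [|z Xb IH]; simpl; auto.
    destruct (excluded_middle_informative (S (embed d z))); simpl length; lia. }
  rewrite <- Hcount. split.
  - intros [l [Hnd [Hl <-]]]. f_equal.
    apply Nat.le_antisymm; apply NoDup_incl_length; auto using NoDup_filter;
      intros z Hz; [apply Hmem, Hl | apply Hl, Hmem]; exact Hz.
  - intros Hn. apply Nat2Z.inj in Hn as ->. exists (filter f Xb).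
    split; [apply NoDup_filter; auto|]. split; [intro z; rewrite Hmem; tauto | reflexivity].
Qed.

Lemma dil_bound {d} (P : pt d -> Prop) B x t s :
  (forall y, P y -> forall i, Rabs (y i) <= B) ->
  0 <= B -> 0 <= t <= s -> dil t P x -> forall i, Rabs (x i) <= s * B.
Proof.
  intros HB HB0 ht [[_ h]|[h [y [Hy ey]]]] i.
  - rewrite h, Rabs_R0. nra.
  - rewrite ey, Rabs_mult, Rabs_right by lra.
    pose proof (HB y Hy i). pose proof (Rabs_pos (y i)). nra.
Qed.

Lemma lattice_box_covers_dil {d} (P : pt d -> Prop) B K s :
  (forall y, P y -> forall i, Rabs (y i) <= B) -> 0 <= B -> 0 < s -> s * B <= INR K ->
  (forall t, 0 <= t <= s -> covers (lattice_box d K) (dil t P)) /\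
  covers (lattice_box d K) (dil s (ppyr P)).
Proof.
  intros HB HB0 hs hK. split.
  - intros t ht. apply lattice_box_covers. intros x hx i.
    pose proof (dil_bound P B x t s HB HB0 ht hx i). lra.
  - apply lattice_box_covers. intros x hx i.
    apply dil_ppyr in hx as [h|[t [[ht dt] hts]]]; auto.
    + rewrite h, Rabs_R0. apply pos_INR.
    + pose proof (dil_bound P B x t s HB HB0 (conj (Rlt_le _ _ ht) hts) dt i). lra.
Qed.

Lemma lattice_count_lattice_box {d} K (S : pt d -> Prop) n :
  covers (lattice_box d K) S -> lattice_count S n <-> Z.of_nat n = box_count (lattice_box d K) S.
Proof. apply lattice_count_box; [apply NoDup_nodup | apply lattice_box_length]. Qed.

Lemma box_count_ge0 {d} Xb (S : pt d -> Prop) : (0 <= box_count Xb S)%Z.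
Proof.
  unfold box_count. induction Xb as [|z Xb IH]; simpl; [lia|].
  unfold ind at 1. destruct (excluded_middle_informative (S (embed d z))); lia.
Qed.

Lemma box_count_eq {d} K (S1 S2 : pt d -> Prop) :
  covers (lattice_box d K) S1 -> covers (lattice_box d K) S2 ->
  (forall n, lattice_count S1 n <-> lattice_count S2 n) ->
  box_count (lattice_box d K) S1 = box_count (lattice_box d K) S2.
Proof.
  intros H1 H2 H. set (n := Z.to_nat (box_count (lattice_box d K) S1)).
  pose proof (box_count_ge0 (lattice_box d K) S1).
  specialize (H n).
  rewrite (lattice_count_lattice_box K S1 n H1), (lattice_count_lattice_box K S2 n H2) in H.
  assert (Hn : Z.of_nat n = box_count (lattice_box d K) S1) by (unfold n; lia).
  rewrite <- Hn. exact (proj1 H Hn).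
Qed.

Lemma dil0 {d} (S : pt d -> Prop) x : dil 0 S x <-> forall i, x i = 0.
Proof. unfold dil. split; [intros [[_ h]|[h _]]; [auto | lra] | left; auto]. Qed.

Lemma lattice_count_ext {d} (S1 S2 : pt d -> Prop) n :
  (forall x, S1 x <-> S2 x) -> lattice_count S1 n <-> lattice_count S2 n.
Proof.
  intro h. unfold lattice_count, is_lattice_pt_of.
  split; intros [l [a [b c]]]; exists l; split; auto; split; auto;
    intro z; rewrite b; specialize (h (embed d z)); tauto.
Qed.

Record spaced (E : list R) (del s : R) : Prop := {
  spaced_pos : 0 < del;
  spaced_NoDup : NoDup E;
  spaced_range : forall e, In e E -> del < e <= s;
  spaced_gap : forall e e', In e E -> In e' E -> e <> e' -> del < Rabs (e - e') }.

(* For an interval [Tt] of scales with least element [a], only the term [e = a] survives. *)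
Lemma zsum_jumps (Tt : R -> Prop) E del s : spaced E del s ->
  (forall e, In e E -> ~ Tt e -> ~ Tt (e - del)) ->
  (forall t1 t t2, Tt t1 -> Tt t2 -> t1 <= t <= t2 -> Tt t) ->
  (forall t, Tt t -> exists a, Tt a /\ forall t', Tt t' -> a <= t') ->
  (forall a, Tt a -> (forall t, Tt t -> a <= t) -> a <= s -> In a E) ->
  zsum E (fun e => (ind (Tt e) - ind (Tt (e - del)%R))%Z) = ind (exists t, Tt t /\ t <= s).
Proof.
  intros [hd hND hE hgap] hjump hcv hmin hcov.
  destruct (classic (exists t, Tt t /\ t <= s)) as [[t [Ht Hts]]|hn].
  - rewrite ind_T by eauto.
    destruct (hmin t Ht) as [a [Ha Hamin]].
    assert (HaE : In a E) by (apply hcov; auto; pose proof (Hamin t Ht); lra).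
    rewrite <- (zsum_ind_eq E a hND HaE). apply zsum_ext. intros e He.
    destruct (classic (Tt e)) as [Te|Te]; [|rewrite !ind_F; auto; intros ->; auto].
    rewrite (ind_T _ Te). destruct (Req_dec_T e a) as [->|Neq].
    + rewrite (ind_T (a = a) eq_refl), ind_F; [lia|].
      intro h. pose proof (Hamin _ h). lra.
    + rewrite (ind_F (e = a) Neq), ind_T; [lia|].
      pose proof (Hamin e Te). pose proof (hgap e a He HaE Neq).
      rewrite Rabs_right in * by lra.
      apply (hcv a (e - del) e); auto. lra.
  - rewrite (ind_F _ hn). apply zsum0. intros e He.
    assert (~ Tt e) by (intro h; apply hn; exists e; split; auto; apply hE; auto).
    rewrite !ind_F; auto.
Qed.

Section Breakpoints.

Variable d : nat.
Variable P : pt d -> Prop.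
Variable Xb : list (list Z).

Definition no_jump_below (E : list R) (del : R) : Prop :=
  forall z, In z Xb -> forall e, In e E ->
    ~ scales P (embed d z) e -> ~ scales P (embed d z) (e - del).

Definition has_first_scales (E : list R) (s : R) : Prop :=
  forall z, In z Xb -> ~ (forall i, embed d z i = 0) ->
    forall a, first_scale d P (embed d z) a -> a <= s -> In a E.

Hypothesis HP : compact_convex P.

Lemma ppyr_point_jumps x E del s : 0 < s -> spaced E del s ->
  (forall e, In e E -> ~ scales P x e -> ~ scales P x (e - del)) ->
  (~ (forall i, x i = 0) -> forall a, first_scale d P x a -> a <= s -> In a E) ->
  ind (dil s (ppyr P) x) =
    (ind (forall i, x i = 0%R) + zsum E (fun e => ind (dil e P x) - ind (dil (e - del)%R P x)))%Z.
Proof.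
  intros hs HE hjump hcov. pose proof (spaced_range _ _ _ HE) as hE.
  rewrite (zsum_ext _ _ (fun e => (ind (scales P x e) - ind (scales P x (e - del)%R))%Z)).
  2:{ intros e He. pose proof (hE e He). pose proof (spaced_pos _ _ _ HE).
      f_equal; apply ind_iff; unfold scales; split; try tauto; intros; split; auto; lra. }
  destruct (classic (forall i, x i = 0)) as [Z0|Z0].
  - rewrite !ind_T by (auto; apply dil_ppyr; auto). rewrite zsum0; [lia|].
    intros e He. pose proof (hE e He). pose proof (spaced_pos _ _ _ HE).
    rewrite (ind_iff _ _ (scales_origin d P x e Z0 ltac:(lra))),
      (ind_iff _ _ (scales_origin d P x (e - del) Z0 ltac:(lra))). lia.
  - rewrite (ind_F _ Z0), (ind_iff _ _ (dil_ppyr P x s hs)).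
    rewrite zsum_jumps with (s := s); auto.
    + apply ind_iff. split; [intros [h|h]; tauto | auto].
    + intros t1 t t2. apply scales_interval; auto.
    + intros t Ht. apply (first_scale_exists d P HP x t); auto.
    + intros a Ha Hmin. apply hcov; [exact Z0 | split; auto].
Qed.

Lemma box_count_ppyr E del s : 0 < s -> spaced E del s ->
  no_jump_below E del -> has_first_scales E s ->
  box_count Xb (dil s (ppyr P)) =
    (box_count Xb (fun x : pt d => forall i, x i = 0%R) +
     zsum E (fun e => box_count Xb (dil e P) - box_count Xb (dil (e - del)%R P)))%Z.
Proof.
  intros hs HE hjump hfirst. unfold box_count.
  rewrite (zsum_ext _ _ _ (fun z Hz => ppyr_point_jumps (embed d z) E del s hs HE
                                         (hjump z Hz) (hfirst z Hz))).
  rewrite zsumD, exchange_zsum. f_equal. apply zsum_ext. intros e _. apply zsumB.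
Qed.

Lemma no_jump_below_small E : (forall e, In e E -> 0 < e) -> small_enough (no_jump_below E).
Proof.
  intros hE. destruct (small_enough_all (list_prod Xb E)
    (fun p del => ~ scales P (embed d (fst p)) (snd p) ->
                  ~ scales P (embed d (fst p)) (snd p - del))) as [eps [heps H]].
  - intros [z e] Hp. apply in_prod_iff in Hp as [_ He]. simpl.
    destruct (classic (scales P (embed d z) e)) as [h|h].
    + exists 1; split; [lra | intros; contradiction].
    + destruct (not_scales_below d P HP (embed d z) e (hE e He) h) as [ep [hep hep']].
      exists ep; split; auto.
  - exists eps; split; auto. intros del hdel z Hz e He.
    apply (H del hdel (z, e)), in_prod; auto.
Qed.

End Breakpoints.

Lemma finite_image_rel {A} (l : list A) (G : A -> R -> Prop) :
  (forall a r r', G a r -> G a r' -> r = r') ->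
  exists E, (forall a r, In a l -> G a r -> In r E) /\ (forall r, In r E -> exists a, G a r).
Proof.
  intro hu. induction l as [|a l [E [H1 H2]]].
  { exists []; split; intros; contradiction. }
  destruct (classic (exists r, G a r)) as [[r Hr]|hn].
  - exists (r :: E). split.
    + intros b r' [<-|Hb] Hg; [left; apply (hu a) | right; apply (H1 b)]; auto.
    + intros r' [<-|Hr']; eauto.
  - exists E. split; auto. intros b r' [<-|Hb] Hg; [exfalso|]; eauto.
Qed.

Lemma first_scales_finite {d} (P : pt d -> Prop) Xb s :
  exists E, has_first_scales d P Xb E s /\ forall e, In e E -> 0 < e <= s.
Proof.
  destruct (finite_image_rel Xb (fun z a => first_scale d P (embed d z) a /\ a <= s))
    as [E [H1 H2]].
  - intros z r r' [[s1 h1] _] [[s2 h2] _]. apply Rle_antisym; [apply h1 | apply h2]; auto.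
  - exists E. split.
    + intros z Hz _ a Ha Has. apply (H1 z); auto.
    + intros e He. destruct (H2 e He) as [z [[[h _] _] h']]. lra.
Qed.

Lemma spaced_small E s : NoDup E -> (forall e, In e E -> 0 < e <= s) ->
  small_enough (fun del => spaced E del s).
Proof.
  intros hND hE.
  assert (Hbelow : small_enough (fun del => forall e, In e E -> del < e)).
  { apply small_enough_all. intros e He. pose proof (hE e He).
    exists (e / 2). split; [lra | intros; lra]. }
  assert (Hgap : small_enough (fun del => forall p, In p (list_prod E E) ->
                                 fst p <> snd p -> del < Rabs (fst p - snd p))).
  { apply small_enough_all. intros [e e'] _. simpl.
    destruct (Req_dec_T e e') as [Eq|Neq]; [exists 1; split; [lra | intros; contradiction]|].
    exists (Rabs (e - e') / 2). assert (0 < Rabs (e - e')) by (apply Rabs_pos_lt; lra).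
    split; [lra | intros; lra]. }
  destruct (small_enough_and _ _ Hbelow Hgap) as [eps [heps H]].
  exists eps; split; auto. intros del hdel. destruct (H del hdel) as [h1 h2]. split; auto.
  - lra.
  - intros e He. pose proof (hE e He). pose proof (h1 e He). lra.
  - intros e e' He He' hne. apply (h2 (e, e')); auto. apply in_prod; auto.
Qed.

Lemma common_breakpoints {d} (P Q : pt d -> Prop) Xb s :
  compact_convex P -> compact_convex Q ->
  exists E del, spaced E del s /\
    no_jump_below d P Xb E del /\ has_first_scales d P Xb E s /\
    no_jump_below d Q Xb E del /\ has_first_scales d Q Xb E s.
Proof.
  intros GP GQ.
  destruct (first_scales_finite P Xb s) as [EP [HP1 HP2]].
  destruct (first_scales_finite Q Xb s) as [EQ [HQ1 HQ2]].
  set (E := nodup Req_dec_T (EP ++ EQ)).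
  assert (HE : forall e, In e E <-> In e EP \/ In e EQ)
    by (intro e; unfold E; rewrite nodup_In; apply in_app_iff).
  assert (hE : forall e, In e E -> 0 < e <= s)
    by (intros e He; apply HE in He as [He|He]; auto).
  destruct (small_enough_witness _ (small_enough_and _ _ (spaced_small E s (NoDup_nodup _ _) hE)
    (small_enough_and _ _ (no_jump_below_small d P Xb GP E (fun e h => proj1 (hE e h)))
                          (no_jump_below_small d Q Xb GQ E (fun e h => proj1 (hE e h))))))
    as [del [_ [HS [HjP HjQ]]]].
  exists E, del. split; [exact HS|]. split; [exact HjP|]. split; [|split; [exact HjQ|]].
  - intros z Hz Hnz a Ha Has. apply HE. left. apply (HP1 z); auto.
  - intros z Hz Hnz a Ha Has. apply HE. right. apply (HQ1 z); auto.
Qed.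

Theorem lemma2p1 (d : nat) (P Q : pt d -> Prop) :
  is_polytope P -> is_polytope Q ->
  (forall s : R, 0 <= s -> forall n : nat, Lp P s n <-> Lp Q s n) ->
  forall s : R, 0 <= s -> forall n : nat, Lp (ppyr P) s n <-> Lp (ppyr Q) s n.
Proof.
  intros HPp HQp HL s hs n. unfold Lp.
  pose proof (polytope_compact_convex P HPp) as GP.
  pose proof (polytope_compact_convex Q HQp) as GQ.
  destruct (Req_dec_T s 0) as [->|hs0].
  { rewrite !(lattice_count_ext _ (fun x : pt d => forall i, x i = 0) n (dil0 _)). tauto. }
  assert (hs' : 0 < s) by lra.
  destruct (cc_bounded P GP) as [BP [HBP HBPb]], (cc_bounded Q GQ) as [BQ [HBQ HBQb]].
  destruct (INR_unbounded (s * (BP + BQ))) as [K HK].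
  destruct (lattice_box_covers_dil P BP K s HBPb ltac:(lra) hs' ltac:(nra)) as [covP covPP].
  destruct (lattice_box_covers_dil Q BQ K s HBQb ltac:(lra) hs' ltac:(nra)) as [covQ covQQ].
  assert (HPQ : forall t, 0 < t <= s ->
            box_count (lattice_box d K) (dil t P) = box_count (lattice_box d K) (dil t Q)).
  { intros t ht. apply box_count_eq; [apply covP | apply covQ | apply HL]; lra. }
  destruct (common_breakpoints P Q (lattice_box d K) s GP GQ)
    as [E [del [HE [HjP [HfP [HjQ HfQ]]]]]].
  rewrite (lattice_count_lattice_box K _ n covPP), (lattice_count_lattice_box K _ n covQQ).
  rewrite (box_count_ppyr d P _ GP E del s hs' HE HjP HfP),
          (box_count_ppyr d Q _ GQ E del s hs' HE HjQ HfQ).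
  enough (Hjumps : forall e, In e E ->
    (box_count (lattice_box d K) (dil e P) - box_count (lattice_box d K) (dil (e - del) P) =
     box_count (lattice_box d K) (dil e Q) - box_count (lattice_box d K) (dil (e - del) Q))%Z)
    by (rewrite (zsum_ext _ _ _ Hjumps); tauto).
  intros e He. pose proof (spaced_range _ _ _ HE e He). pose proof (spaced_pos _ _ _ HE).
  rewrite !HPQ by lra. reflexivity.
Qed.
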